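(* For every $w\in W$, the Chari operator $T_w$ maps the subring $\mathbb{Z}[W_{i,a}^{\pm1}]_{i\in I,a\in\mathbb{C}^\times}\subset\mathcal{Y}$ into itself.
   Context: Let $\mathfrak{g}$ be a finite-dimensional simple complex Lie algebra with Dynkin index set $I=\{1,\dots,n\}$ and Cartan matrix $C=(C_{i,j})_{i,j\in I}$. Let $d_i$ ($i\in I$) be the relatively prime positive integers such that $(d_iC_{i,j})$ is symmetric, and let $d=\max_i d_i$ be the lacing number. Let $W$ be the Weyl group, generated by simple reflections $s_i$. Fix $q\in\mathbb{C}^\times$ not a root of unity and set $q_i=q^{d_i}$. Let $\mathcal{Y}=\mathbb{Z}[Y_{i,a}^{\pm1}]_{i\in I,a\in\mathbb{C}^\times}$ and $$A_{i,a}=Y_{i,aq_i^{-1}}Y_{i,aq_i}\Big(\prod_{j:C_{j,i}=-1}Y_{j,a}\prod_{j:C_{j,i}=-2}Y_{j,aq^{-1}}Y_{j,aq}\prod_{j:C_{j,i}=-3}Y_{j,aq^{-2}}Y_{j,a}Y_{j,aq^2}\Big)^{-1}.$$ The Chari operators are the ring automorphisms $T_i$ ($i\in I$) of $\mathcal{Y}$ with $T_i(Y_{i,a})=Y_{i,a}A_{i,aq_i}^{-1}$ and $T_i(Y_{j,a})=Y_{j,a}$ for $j\neq i$; they satisfy the braid relations of $\mathfrak{g}$, and for $w\in W$ with reduced decomposition $w=s_{i_1}\cdots s_{i_k}$ one sets $T_w=T_{i_1}\cdots T_{i_k}$ (independent of the reduced decomposition). For $i\in I$, $a\in\mathbb{C}^\times$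 set $W_{i,a}=Y_{i,a}$ if $d_i=d$, $W_{i,a}=Y_{i,aq^{-1}}Y_{i,aq}$ if $d_i=d-1$, and $W_{i,a}=Y_{i,aq^{-2}}Y_{i,a}Y_{i,aq^2}$ if $d_i=d-2$. *)

From HB Require Import structures.
From mathcomp Require Import all_boot all_order all_algebra.
From mathcomp Require Import reals complex.
Set Implicit Arguments. Unset Strict Implicit. Unset Printing Implicit Defensive.
Import Order.TTheory GRing.Theory Num.Theory.
Local Open Scope ring_scope.

(* C i j = <alpha_i^vee, alpha_j>; d : symmetrizing integers.          *)
Record finite_cartan (n : nat) (C : 'M[int]_n) (d : 'I_n -> nat) : Prop := {
  fc_n_pos : (0 < n)%N;
  fc_diag : forall i, C i i = 2;
  fc_offdiag : forall i j, i != j -> C i j <= 0;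
  fc_d_pos : forall i, (0 < d i)%N;
  fc_sym : forall i j, (d i)%:Z * C i j = (d j)%:Z * C j i;
  fc_coprime : \big[gcdn/0%N]_i d i = 1%N;
  fc_indec : forall A : {set 'I_n}, A != set0 -> A != setT ->
               exists i, exists j, [/\ i \in A, j \notin A & C i j != 0];
  fc_posdef : forall x : 'I_n -> rat, (exists i, x i != 0) ->
               0 < \sum_i \sum_j x i * ((d i)%:R * (C i j)%:~R) * x j }.

Definition lacing (n : nat) (d : 'I_n -> nat) : nat := \max_i d i.

(* Weyl group: simple reflections acting on the root lattice Z^I,      *)
(* s_i(v) = v - <v, alpha_i^vee> alpha_i.                             *)
Definition refl (n : nat) (C : 'M[int]_n) (i : 'I_n) (v : 'I_n -> int)
  : 'I_n -> int :=
  fun j => if j == i then v i - \sum_k C i k * v k else v j.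

Definition word_act (n : nat) (C : 'M[int]_n) (s : seq 'I_n)
  (v : 'I_n -> int) : 'I_n -> int :=
  foldr (fun i u => refl C i u) v s.

Definition same_weyl (n : nat) (C : 'M[int]_n) (s t : seq 'I_n) : Prop :=
  forall v j, word_act C s v j = word_act C t v j.

Definition reduced_word (n : nat) (C : 'M[int]_n) (s : seq 'I_n) : Prop :=
  forall t, same_weyl C s t -> (size s <= size t)%N.

(* The ring Y = Z[Y_{i,a}^{+-1}] realized as the ring of (Laurent      *)
(* polynomial) functions on the torus (C^x)^(I x C): a point assigns a *)
(* nonzero value x i a to every variable Y_{i,a}.                      *)
Section Torus.
Variable (R : realType).
Local Notation K := (R[i]).

Definition pt (n : nat) := {x : 'I_n -> K -> K | forall i a, x i a != 0}.

Definition Fn (n : nat) := pt n -> K.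

Definition Yv (n : nat) (i : 'I_n) (a : K) : Fn n := fun x => sval x i a.

Definition A_raw (n : nat) (C : 'M[int]_n) (d : 'I_n -> nat) (q : K)
  (x : 'I_n -> K -> K) (i : 'I_n) (a : K) : K :=
  let qi := q ^+ d i in
  x i (a / qi) * x i (a * qi) *
  (\prod_(j | C j i == -1) x j a *
   \prod_(j | C j i == -2) (x j (a / q) * x j (a * q)) *
   \prod_(j | C j i == -3) (x j (a / q ^+ 2) * x j a * x j (a * q ^+ 2)))^-1.

Definition A (n : nat) (C : 'M[int]_n) (d : 'I_n -> nat) (q : K)
  (i : 'I_n) (a : K) : Fn n := fun x => A_raw C d q (sval x) i a.

Lemma A_raw_neq0 n (C : 'M[int]_n) d q (x : pt n) i a :
  A_raw C d q (sval x) i a != 0.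
Proof.
case: x => x hx /=; rewrite /A_raw.
rewrite !mulf_neq0 ?invr_eq0 ?hx //.
rewrite !mulf_neq0 //; apply/prodf_neq0 => j _; rewrite ?mulf_neq0 ?hx //.
Qed.

(* the point map dual to the Chari operator T_i *)
Definition tau_raw (n : nat) (C : 'M[int]_n) (d : 'I_n -> nat) (q : K)
  (i : 'I_n) (x : 'I_n -> K -> K) : 'I_n -> K -> K :=
  fun j b => if j == i then x i b * (A_raw C d q x i (b * q ^+ d i))^-1
             else x j b.

Lemma tau_raw_neq0 n (C : 'M[int]_n) d q i (x : pt n) j b :
  tau_raw C d q i (sval x) j b != 0.
Proof.
rewrite /tau_raw; case: (j == i); last by case: x.
by rewrite mulf_neq0 ?invr_eq0 ?A_raw_neq0 //; case: x.
Qed.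

Definition tau (n : nat) (C : 'M[int]_n) (d : 'I_n -> nat) (q : K)
  (i : 'I_n) (x : pt n) : pt n :=
  exist _ (tau_raw C d q i (sval x)) (tau_raw_neq0 C d q i x).

(* Chari operator T_i : the ring endomorphism with
   T_i(Y_{i,a}) = Y_{i,a} A_{i,a q_i}^{-1}, T_i(Y_{j,a}) = Y_{j,a} (j <> i) *)
Definition T (n : nat) (C : 'M[int]_n) (d : 'I_n -> nat) (q : K)
  (i : 'I_n) (f : Fn n) : Fn n := fun x => f (tau C d q i x).

Definition Tword (n : nat) (C : 'M[int]_n) (d : 'I_n -> nat) (q : K)
  (s : seq 'I_n) (f : Fn n) : Fn n := foldr (fun i g => T C d q i g) f s.

Definition Wv (n : nat) (d : 'I_n -> nat) (q : K) (i : 'I_n) (a : K) : Fn n :=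
  fun x =>
  if d i == lacing d then Yv i a x
  else if d i == (lacing d).-1 then Yv i (a / q) x * Yv i (a * q) x
  else (* d i = d - 2 *) Yv i (a / q ^+ 2) x * Yv i a x * Yv i (a * q ^+ 2) x.

Inductive in_subring (n : nat) (G : Fn n -> Prop) : Fn n -> Prop :=
| sub_gen f : G f -> in_subring G f
| sub_one : in_subring G (fun _ => 1)
| sub_add f g : in_subring G f -> in_subring G g ->
                in_subring G (fun x => f x + g x)
| sub_opp f : in_subring G f -> in_subring G (fun x => - f x)
| sub_mul f g : in_subring G f -> in_subring G g ->
                in_subring G (fun x => f x * g x).

Definition W_gens (n : nat) (d : 'I_n -> nat) (q : K) (f : Fn n) : Prop :=
  exists i, exists2 a, a != 0 &
    (f = Wv d q i a \/ f = (fun x => (Wv d q i a x)^-1)).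

Definition ZW (n : nat) (d : 'I_n -> nat) (q : K) : Fn n -> Prop :=
  in_subring (W_gens d q).

End Torus.

(* In finite type every d_i is either the lacing number d, or d_i = 1 and d is 2 or 3.
   Indeed, the symmetrized Cartan matrix (d_i C_ij) being positive definite, two bonds
   joining nodes with different d cannot be linked by a chain of nodes sharing one
   value of d: the vector equal to -C on the outer ends of the bonds and to 2 along
   the chain would have nonpositive norm.  As the diagram is connected, d then takes
   at most two values, on adjacent nodes, and coprimality makes the smaller one 1.

   T_i fixes W_{j,a} for j <> i, and T_i(Y_{i,b}) = N_{i,bq_i} / Y_{i,bq_i^2} where
   N_{i,c} is the denominator of A_{i,c}.  Writing W_{i,a} as the product of the
   Y_{i,aq^(2k-m)}, k <= m = d - d_i, gives T_i(W_{i,a}) = W_{i,aq_i^2}^-1 times the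
   product of the N_{i,aq^(2k-m)q_i}.  By the dichotomy these neighbour factors
   regroup into W's: if d_i = d, a neighbour j with C_ji = -r has d - d_j = r - 1 and
   contributes W_{j,c}; if d_i = 1 < d, all neighbours are simple, and those with
   d_j = 1 contribute W_{j,aq}.  So each T_i sends W^{+-1} to Laurent monomials in
   the W's and preserves the subring they generate. *)

From HB Require Import structures.
From mathcomp Require Import all_boot all_order all_algebra.
From mathcomp Require Import reals complex.
From mathcomp Require Import ring zify.
From mathcomp Require boolp.
Set Implicit Arguments. Unset Strict Implicit. Unset Printing Implicit Defensive.
Import Order.TTheory GRing.Theory Num.Theory.
Local Open Scope ring_scope.

Section CartanData.
Variables (n : nat) (C : 'M[int]_n) (d : 'I_n -> nat).
Hypothesis cartan : finite_cartan C d.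
Local Notation D := (lacing d).

Definition symcartan (i j : 'I_n) : int := (d i)%:Z * C i j.

Lemma d_gt0 i : 0 < (d i)%:Z.
Proof. by rewrite ltz_nat; exact: fc_d_pos cartan i. Qed.

Lemma d_le_lacing i : (d i <= D)%N.
Proof. exact: leq_bigmax. Qed.

Lemma symcartan_sym i j : symcartan i j = symcartan j i.
Proof. exact: fc_sym cartan i j. Qed.

Lemma symcartan_diag i : symcartan i i = 2 * (d i)%:Z.
Proof. by rewrite /symcartan (fc_diag cartan) mulrC. Qed.

Lemma cartan_le_m1 i j : i != j -> C i j != 0 -> C i j <= -1.
Proof. by move=> /(fc_offdiag cartan); lia. Qed.

Lemma symcartan_le0 i j : i != j -> symcartan i j <= 0.
Proof. by move=> /(fc_offdiag cartan) h; rewrite /symcartan; have := d_gt0 i; nia. Qed.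

Lemma cartan_neq0_sym i j : C i j != 0 -> C j i != 0.
Proof.
move=> h; apply/negP => /eqP h0; move: (fc_sym cartan i j); rewrite h0 mulr0.
by have := d_gt0 i; move: h; nia.
Qed.

Definition qform (L : seq 'I_n) (c : 'I_n -> int) : int :=
  \sum_(i <- L) \sum_(j <- L) c i * symcartan i j * c j.

Lemma eq_qform L c c' : {in L, c =1 c'} -> qform L c = qform L c'.
Proof.
move=> h; rewrite /qform !big_seq; apply: eq_bigr => i iL.
by rewrite big_seq [RHS]big_seq; apply: eq_bigr => j jL; rewrite !h.
Qed.

Lemma qform_cons w L c : qform (w :: L) c =
  c w * symcartan w w * c w +
  \sum_(j <- L) (c w * symcartan w j * c j + c j * symcartan j w * c w) +
  qform L c.
Proof.
rewrite /qform big_cons big_cons.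
under [X in _ + X = _]eq_bigr do rewrite big_cons.
by rewrite big_split /= big_split /=; ring.
Qed.

Lemma qform_gt0 L c : uniq L -> (exists2 i, i \in L & c i != 0) ->
  0 < qform L c.
Proof.
move=> uL [i iL ci].
pose c0 k := if k \in L then c k else 0.
have -> : qform L c = \sum_i \sum_j c0 i * symcartan i j * c0 j.
  rewrite /qform (big_uniq _ uL) big_mkcond; apply: eq_bigr => k _ /=.
  rewrite /c0; case: (k \in L); last by rewrite big1 // => l _; rewrite !mul0r.
  rewrite (big_uniq _ uL) big_mkcond; apply: eq_bigr => l _ /=.
  by case: (l \in L); rewrite ?mulr0.
rewrite -(ltr0z rat); pose x k : rat := (c0 k)%:~R.
have -> : (\sum_k \sum_l c0 k * symcartan k l * c0 l)%:~R =
    \sum_k \sum_l x k * ((d k)%:R * (C k l)%:~R) * x l :> rat.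
  rewrite rmorph_sum; apply: eq_bigr => k _; rewrite rmorph_sum.
  by apply: eq_bigr => l _; rewrite /symcartan !rmorphM /= -pmulrn.
by apply: (fc_posdef cartan); exists i; rewrite /x /c0 iL intr_eq0.
Qed.

Lemma cartan_prod_le3 i j : i != j -> C i j * C j i <= 3.
Proof.
move=> ij; rewrite leNgt; apply/negP => h4.
pose c k := if k == i then 2 * (d j)%:Z else - (d i)%:Z * C i j.
have : 0 < qform [:: i; j] c.
  apply: qform_gt0; first by rewrite /= inE ij.
  by exists i; rewrite ?inE ?eqxx // /c eqxx; have := d_gt0 j; lia.
rewrite /qform !big_cons !big_nil /c eqxx eq_sym (negbTE ij).
rewrite !symcartan_diag [symcartan j i]symcartan_sym /symcartan.
have hs := fc_sym cartan i j; have di := d_gt0 i; have dj := d_gt0 j.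
have eX : (d j)%:Z * ((d i)%:Z * C i j * ((d i)%:Z * C i j)) =
          (d i)%:Z * (d j)%:Z * (d j)%:Z * (C i j * C j i) by rewrite {2}hs; ring.
have hp : 0 < (d i)%:Z * (d j)%:Z * (d j)%:Z by rewrite !mulr_gt0.
have : (d i)%:Z * (d j)%:Z * (d j)%:Z * 4 <=
       (d i)%:Z * (d j)%:Z * (d j)%:Z * (C i j * C j i) by rewrite ler_pM2l.
by move: eX; lia.
Qed.

Lemma bond_ge u w : u != w -> C u w != 0 -> (d w)%:Z <= (d u)%:Z * - C u w.
Proof.
move=> uw cuw.
have hwu : C w u <= -1 by apply: cartan_le_m1 (cartan_neq0_sym cuw); rewrite eq_sym.
rewrite mulrN (fc_sym cartan u w); have := d_gt0 w; nia.
Qed.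

Lemma hetero_bond_ge u w : C u w != 0 -> d u != d w ->
  2 * (d w)%:Z <= (d u)%:Z * (C u w * C u w).
Proof.
move=> cuw duw; have uw : u != w by apply: contraNneq duw => ->.
have huw := cartan_le_m1 uw cuw.
have hwu : C w u <= -1 by apply: cartan_le_m1 (cartan_neq0_sym cuw); rewrite eq_sym.
have hs := fc_sym cartan u w; have du := d_gt0 u; have dw := d_gt0 w.
have h2 : 2 <= C u w * C w u.
  case: (ltP (C u w) (-1)) => ha; first nia.
  have ea : C u w = -1 by lia.
  case: (ltP (C w u) (-1)) => hb; first nia.
  have eb : C w u = -1 by lia.
  by move: hs duw; rewrite ea eb; lia.
have -> : (d u)%:Z * (C u w * C u w) = (d w)%:Z * (C u w * C w u).
  by rewrite mulrA hs; ring.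
by rewrite mulrC ler_pM2l.
Qed.

Lemma sum_symcartan_le1 r w k : uniq r -> w \notin r -> k \in r ->
  \sum_(j <- r) symcartan w j <= symcartan w k.
Proof.
move=> ur wr kr; rewrite (bigD1_seq k) //= -[leRHS]addr0 lerD2l.
rewrite big_seq_cond; apply: (big_ind (fun x => x <= 0)) => // [x y|j]; first lia.
by case/andP=> jr _; apply: symcartan_le0; apply: contraNneq wr => ->.
Qed.

Lemma sum_symcartan_le2 r w k1 k2 : uniq r -> w \notin r -> k1 \in r -> k2 \in r ->
  k1 != k2 -> \sum_(j <- r) symcartan w j <= symcartan w k1 + symcartan w k2.
Proof.
move=> ur wr k1r k2r k12; rewrite (bigD1_seq k1) //= lerD2l -big_filter.
apply: sum_symcartan_le1; first exact: filter_uniq.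
  by rewrite mem_filter negb_and wr orbT.
by rewrite mem_filter eq_sym k12.
Qed.

Lemma qform_cross c w r : {in r, forall j, c j = 2} ->
  \sum_(j <- r) (c w * symcartan w j * c j + c j * symcartan j w * c w) =
  4 * c w * \sum_(j <- r) symcartan w j.
Proof.
move=> c2; rewrite mulr_sumr !big_seq; apply: eq_bigr => j jr.
by rewrite (c2 j jr) [symcartan j w]symcartan_sym; ring.
Qed.

Definition same_d_edge : rel 'I_n := [rel u v | (C u v != 0) && (d u == d v)].

Lemma path_same_d p0 P : path same_d_edge p0 P -> {in p0 :: P, forall k, d k = d p0}.
Proof.
elim: P p0 => [|p1 P IH] p0 /=; first by move=> _ k; rewrite inE => /eqP->.
case/andP => /andP[_ /eqP d01] hP k; rewrite inE => /orP[/eqP->//|kP].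
by rewrite d01; apply: IH; rewrite ?inE ?kP ?orbT.
Qed.

Lemma connect_same_d a b : connect same_d_edge a b -> d b = d a.
Proof. by case/connectP=> p hp ->; apply: (path_same_d hp); exact: mem_last. Qed.

Lemma path_qform2_le p0 P : path same_d_edge p0 P -> uniq (p0 :: P) ->
  qform (p0 :: P) (fun=> 2) <= 8 * (d p0)%:Z.
Proof.
elim: P p0 => [|p1 P IH] p0.
  by move=> _ _; rewrite /qform !big_cons !big_nil symcartan_diag; lia.
move=> /= /andP[/andP[c01 /eqP d01] hP] /andP[n0 u1].
have p01 : p0 != p1 by apply: contraNneq n0 => ->; rewrite inE eqxx.
rewrite qform_cons big_cons; have := IH p1 hP u1; rewrite -d01 => hI.
have hs : \sum_(j <- P) (2 * symcartan p0 j * 2 + 2 * symcartan j p0 * 2) <= 0.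
  rewrite big_seq; apply: (big_ind (fun x => x <= 0)) => // [x y|j jP]; first lia.
  have : p0 != j by apply: contraNneq n0 => ->; rewrite inE jP orbT.
  by move=> /symcartan_le0; rewrite [symcartan j p0]symcartan_sym; lia.
have h01 : symcartan p0 p1 <= - (d p0)%:Z.
  by have := cartan_le_m1 p01 c01; rewrite /symcartan; have := d_gt0 p0; nia.
rewrite [symcartan p1 p0]symcartan_sym symcartan_diag.
by move: hs; set S := \sum_(j <- P) _; lia.
Qed.

Section Chain.
Variables (u1 : 'I_n) (P : seq 'I_n).
Hypotheses (chainP : path same_d_edge u1 P) (uniqP : uniq (u1 :: P)).

Lemma notin_chain w : d w != d u1 -> w \notin u1 :: P.
Proof. by apply: contra => /(path_same_d chainP) ->. Qed.

Lemma sum_chain_le w k : d w != d u1 -> k \in u1 :: P ->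
  \sum_(j <- u1 :: P) symcartan w j <= (d w)%:Z * C w k.
Proof. by move=> dw; apply: sum_symcartan_le1 uniqP (notin_chain dw). Qed.

Lemma qform_chain_le c : {in u1 :: P, forall j, c j = 2} ->
  qform (u1 :: P) c <= 8 * (d u1)%:Z.
Proof. by move=> c2; rewrite (eq_qform c2); exact: path_qform2_le. Qed.

Lemma hetero_cycle_absurd u0 v1 : C u0 u1 != 0 -> C u0 v1 != 0 -> d u0 != d u1 ->
  v1 \in P -> False.
Proof.
move=> c1 c2 du0 v1P; have u0c := notin_chain du0.
have u0u1 : u0 != u1 by apply: contraNneq u0c => ->; exact: mem_head.
have u0v1 : u0 != v1 by apply: contraNneq u0c => ->; rewrite inE v1P orbT.
have u1v1 : u1 != v1 by case/andP: uniqP => u1P _; apply: contraNneq u1P => ->.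
have v1c : v1 \in u1 :: P by rewrite inE v1P orbT.
set a : int := - C u0 u1; set b : int := - C u0 v1.
have ha : 1 <= a by have := cartan_le_m1 u0u1 c1; rewrite /a; lia.
have hb : 1 <= b by have := cartan_le_m1 u0v1 c2; rewrite /b; lia.
pose c k := if k == u0 then a + b else 2.
have c2on : {in u1 :: P, forall k, c k = 2}.
  by move=> k kc; rewrite /c ifN //; apply: contraNneq u0c => <-.
have : 0 < qform (u0 :: u1 :: P) c.
  apply: qform_gt0; first by rewrite cons_uniq u0c uniqP.
  by exists u0; rewrite ?mem_head // /c eqxx; lia.
have cu0 : c u0 = a + b by rewrite /c eqxx.
rewrite qform_cons qform_cross // symcartan_diag cu0.
set S := \sum_(j <- _) _; set Q := qform _ _.
have hS : S <= - (d u0)%:Z * (a + b).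
  apply: le_trans (sum_symcartan_le2 uniqP u0c (mem_head u1 P) v1c u1v1) _.
  by rewrite /symcartan /a /b; lia.
have hQ : Q <= 8 * (d u1)%:Z := qform_chain_le c2on.
have hd : (d u1)%:Z <= (d u0)%:Z * a := bond_ge u0u1 c1.
have d0 := d_gt0 u0.
have h4 : 4 * (a + b) * S <= 4 * (a + b) * (- (d u0)%:Z * (a + b)).
  by rewrite ler_pM2l //; lia.
have hg : 4 * a <= (a + b) * (a + b) by nia.
have {}hg : 4 * ((d u0)%:Z * a) <= (d u0)%:Z * ((a + b) * (a + b)).
  by rewrite mulrCA ler_pM2l.
lia.
Qed.

Lemma two_hetero_bonds_absurd u0 v0 v1 : u0 != v0 -> C u0 u1 != 0 -> d u0 != d u1 ->
  C v0 v1 != 0 -> d v0 != d u1 -> v1 \in u1 :: P -> False.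
Proof.
move=> u0v0 c1 du0 c2 dv0 v1c.
have u0c := notin_chain du0; have v0c := notin_chain dv0.
have u0u1 : u0 != u1 by apply: contraNneq u0c => ->; exact: mem_head.
have v0v1 : v0 != v1 by apply: contraNneq v0c => ->.
have dv1 : d v1 = d u1 := path_same_d chainP v1c.
set a : int := - C u0 u1; set b : int := - C v0 v1.
have ha : 1 <= a by have := cartan_le_m1 u0u1 c1; rewrite /a; lia.
have hb : 1 <= b by have := cartan_le_m1 v0v1 c2; rewrite /b; lia.
pose c k := if k == u0 then a else if k == v0 then b else 2.
have c2on : {in u1 :: P, forall k, c k = 2}.
  move=> k kc; rewrite /c ifN; last by apply: contraNneq u0c => <-.
  by rewrite ifN //; apply: contraNneq v0c => <-.
have cu0 : c u0 = a by rewrite /c eqxx.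
have cv0 : c v0 = b by rewrite /c eq_sym (negbTE u0v0) eqxx.
have : 0 < qform [:: u0, v0, u1 & P] c.
  apply: qform_gt0; first by rewrite cons_uniq in_cons negb_or u0v0 u0c /= v0c.
  by exists u0; rewrite ?mem_head // cu0; lia.
rewrite qform_cons big_cons qform_cross // qform_cons qform_cross //.
rewrite !symcartan_diag cu0 cv0.
set S1 := \sum_(j <- u1 :: P) symcartan u0 j.
set S2 := \sum_(j <- u1 :: P) symcartan v0 j.
set Q := qform _ _.
have hS1 : S1 <= - (d u0)%:Z * a.
  by have := sum_chain_le du0 (mem_head u1 P); rewrite /a; lia.
have hS2 : S2 <= - (d v0)%:Z * b by have := sum_chain_le dv0 v1c; rewrite /b; lia.
have hQ : Q <= 8 * (d u1)%:Z := qform_chain_le c2on.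
have hX : a * symcartan u0 v0 * b + b * symcartan v0 u0 * a <= 0.
  by rewrite [symcartan v0 u0]symcartan_sym; have := symcartan_le0 u0v0; nia.
have e1 : 2 * (d u1)%:Z <= (d u0)%:Z * (a * a).
  by rewrite /a mulrNN; exact: hetero_bond_ge.
have e2 : 2 * (d u1)%:Z <= (d v0)%:Z * (b * b).
  by rewrite /b mulrNN -dv1; apply: hetero_bond_ge; rewrite ?dv1.
have h4a : 4 * a * S1 <= 4 * a * (- (d u0)%:Z * a) by rewrite ler_pM2l //; lia.
have h4b : 4 * b * S2 <= 4 * b * (- (d v0)%:Z * b) by rewrite ler_pM2l //; lia.
lia.
Qed.
End Chain.

Lemma hetero_bond_unique u0 u1 v0 v1 :
  C u0 u1 != 0 -> d u0 != d u1 -> C v0 v1 != 0 -> d v0 != d v1 ->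
  connect same_d_edge u1 v1 -> u0 = v0 /\ u1 = v1.
Proof.
move=> c1 du0 c2 dv0 /connectP[p hp].
case: (shortenP hp) => P chainP uniqP _ lp.
have v1c : v1 \in u1 :: P by rewrite lp mem_last.
have dv1 := path_same_d chainP v1c.
case: (eqVneq u0 v0) => [e0|u0v0]; last first.
  by case: (two_hetero_bonds_absurd chainP uniqP u0v0 c1 du0 c2 _ v1c); rewrite -dv1.
subst v0; split=> //; case: (eqVneq u1 v1) => // u1v1.
case: (hetero_cycle_absurd chainP uniqP c1 c2 du0).
by move: v1c; rewrite inE eq_sym (negbTE u1v1).
Qed.

Lemma same_d_cover i0 j0 : C i0 j0 != 0 -> d i0 != d j0 ->
  forall k, connect same_d_edge i0 k || connect same_d_edge j0 k.
Proof.
move=> cij dij k; apply/negPn/negP => hk.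
pose U := [set k | connect same_d_edge i0 k || connect same_d_edge j0 k].
have U0 : U != set0 by apply/set0Pn; exists i0; rewrite inE connect0.
have UT : U != setT.
  by apply: contraNneq hk => hU; have := in_setT k; rewrite -hU inE.
have [x [y [xU yU cxy]]] := fc_indec cartan U0 UT.
rewrite !inE negb_or in xU yU; case/andP: yU => yi yj.
case: (eqVneq (d x) (d y)) => dxy.
  have exy : connect same_d_edge x y by apply/connect1/andP; rewrite dxy.
  by case/orP: xU => /connect_trans/(_ exy) h; [move: yi | move: yj]; rewrite h.
have dyx : d y != d x by rewrite eq_sym.
have cyx := cartan_neq0_sym cxy.
case/orP: xU => hx.
  have dji : d j0 != d i0 by rewrite eq_sym.
  have [ej _] := hetero_bond_unique (cartan_neq0_sym cij) dji cyx dyx hx.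
  by rewrite ej connect0 in yj.
have [ei _] := hetero_bond_unique cij dij cyx dyx hx.
by rewrite ei connect0 in yi.
Qed.

Lemma two_valued_d_dichotomy x y : C x y != 0 -> (d x < d y)%N ->
  (forall k, d k = d x \/ d k = d y) ->
  forall k, d k = D \/ (d k = 1 /\ (D = 2 \/ D = 3))%N.
Proof.
move=> cxy lxy hk.
have xy : x != y by apply: contraTneq lxy => ->; rewrite ltnn.
have h1 := cartan_le_m1 xy cxy.
have h2 : C y x <= -1 by apply: cartan_le_m1 (cartan_neq0_sym cxy); rewrite eq_sym.
have hs := fc_sym cartan x y; have pb := cartan_prod_le3 xy.
have hyx : C y x = -1.
  have : - C y x < - C x y by nia.
  by nia.
have hy : (d y = d x * 2 \/ d y = d x * 3)%N.
  move: hs; rewrite hyx => hs.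
  have : C x y = -2 \/ C x y = -3 by nia.
  by case=> hc; move: hs; rewrite hc; lia.
have dx1 : d x = 1%N.
  apply/eqP; rewrite -dvdn1 -(fc_coprime cartan); apply/dvdn_biggcdP => k _.
  by case: (hk k) => ->; rewrite ?dvdnn //; case: hy => ->; apply: dvdn_mulr.
have hD : D = d y.
  apply/eqP; rewrite eqn_leq leq_bigmax andbT; apply/bigmax_leqP => k _.
  by case: (hk k) => ->; rewrite ?leqnn // ltnW.
move=> k; case: (hk k) => ->; last by left.
by right; split=> //; rewrite hD; move: hy; rewrite dx1; lia.
Qed.

Lemma d_dichotomy k : d k = D \/ (d k = 1 /\ (D = 2 \/ D = 3))%N.
Proof.
have [/forallP/(_ k)/eqP|/forallPn[u du]] := boolP [forall i, d i == D]; first by left.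
have [m dm] : {m | D = d m}.
  by rewrite /lacing; apply: bigop.eq_bigmax; rewrite card_ord (fc_n_pos cartan).
pose A := [set k | d k == d u].
have A0 : A != set0 by apply/set0Pn; exists u; rewrite inE.
have AT : A != setT.
  by apply: contra du => /eqP AT; have := in_setT m; rewrite -AT inE dm => /eqP ->.
have [i0 [j0 [i0A j0A cij]]] := fc_indec cartan A0 AT.
rewrite !inE in i0A j0A; move/eqP: i0A => i0A.
have dij : d i0 != d j0 by rewrite i0A eq_sym.
have hk k' : d k' = d i0 \/ d k' = d j0.
  by case/orP: (same_d_cover cij dij k') => /connect_same_d ->; [left | right].
case: (ltngtP (d i0) (d j0)) => [lt|gt|eq]; last by rewrite eq eqxx in dij.
  exact: two_valued_d_dichotomy cij lt hk k.
apply: two_valued_d_dichotomy (cartan_neq0_sym cij) gt _ k => k'.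
by case: (hk k'); [right | left].
Qed.

Lemma lacing_sub_le2 i : (D - d i <= 2)%N.
Proof. by case: (d_dichotomy i) => [->|[-> [->|->]]]; rewrite ?subnn. Qed.

Lemma lacing_sub_long_nbr i j r : d i = D -> C j i = - r%:Z -> (0 < r)%N ->
  (D - d j)%N = r.-1.
Proof.
move=> di cji r0.
have ji : j != i by apply/eqP => eji; move: cji; rewrite eji (fc_diag cartan); lia.
have cij : C i j <= -1.
  by apply: cartan_le_m1; [rewrite eq_sym | apply: cartan_neq0_sym; rewrite cji; lia].
have hs := fc_sym cartan j i; have pb := cartan_prod_le3 ji.
have dj := d_gt0 j; have dle := d_le_lacing j.
have hc : C i j = -1.
  apply/eqP; rewrite eq_le cij leNgt; apply/negP => hlt.
  have r1 : r = 1%N by move: pb; rewrite cji; nia.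
  by move: hs; rewrite di cji r1; nia.
have hdr : (d j * r)%N = D by move: hs; rewrite di cji hc; lia.
case: (d_dichotomy j) => [djD|[dj1 hD]]; first by move: hdr dj; rewrite djD subnn; nia.
by move: hdr; rewrite dj1; lia.
Qed.

Lemma short_nbr_ge_m1 i j : d i != D -> -1 <= C j i.
Proof.
move=> di; have [->|ji] := eqVneq j i; first by rewrite (fc_diag cartan).
case: (d_dichotomy i) => [/eqP|[di1 _]]; first by rewrite (negbTE di).
rewrite leNgt; apply/negP => cji.
have cij : C i j <= -1.
  by apply: cartan_le_m1; [rewrite eq_sym | apply: cartan_neq0_sym; lia].
have hs := fc_sym cartan j i; have pb := cartan_prod_le3 ji; have := d_gt0 j.
by move: hs; rewrite di1; nia.
Qed.

End CartanData.

Section ChariOperators.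
Variables (R : realType) (n : nat) (C : 'M[int]_n) (d : 'I_n -> nat) (q : R[i]).
Hypotheses (cartan : finite_cartan C d) (q_neq0 : q != 0).
Local Notation D := (lacing d).
Local Notation W := (Wv d q).

(* [A_raw C d q (sval x) i a = Yv i (a / q_i) x * Yv i (a * q_i) x / A_den i a x]. *)
Definition A_den (i : 'I_n) (a : R[i]) : Fn R n := fun x =>
  \prod_(j | C j i == -1) Yv j a x *
  \prod_(j | C j i == -2) (Yv j (a / q) x * Yv j (a * q) x) *
  \prod_(j | C j i == -3) (Yv j (a / q ^+ 2) x * Yv j a x * Yv j (a * q ^+ 2) x).

Lemma Yv_neq0 j a (x : pt R n) : Yv j a x != 0.
Proof. exact: svalP x j a. Qed.

Lemma A_den_neq0 i a x : A_den i a x != 0.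
Proof.
by rewrite !mulf_neq0 //; apply/prodf_neq0 => j _; rewrite ?mulf_neq0 ?Yv_neq0.
Qed.

Lemma T_Yv_self i b x : T C d q i (Yv i b) x =
  A_den i (b * q ^+ d i) x / Yv i (b * q ^+ d i * q ^+ d i) x.
Proof.
rewrite /T /Yv /tau /= /tau_raw eqxx /A_raw mulfK ?expf_neq0 // -/(A_den i _ x).
have := A_den_neq0 i (b * q ^+ d i) x.
have := Yv_neq0 i b x; have := Yv_neq0 i (b * q ^+ d i * q ^+ d i) x.
by rewrite /Yv => y1 y2 N; field; rewrite y1 y2 N.
Qed.

Lemma T_Wv_other i j a : j != i -> T C d q i (W j a) =1 W j a.
Proof. by move=> ji x; rewrite /T /Wv /Yv /= /tau_raw (negbTE ji). Qed.

Lemma Wv_long j c x : d j = D -> W j c x = Yv j c x.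
Proof. by move=> dj; rewrite /Wv dj eqxx. Qed.

Lemma Wv_mid j c x : (D - d j = 1)%N -> W j c x = Yv j (c / q) x * Yv j (c * q) x.
Proof.
move=> dj; have := d_le_lacing d j.
by rewrite /Wv ifN ?ifT //; [apply/eqP | apply/negP => /eqP]; lia.
Qed.

Lemma Wv_short j c x : (D - d j = 2)%N ->
  W j c x = Yv j (c / q ^+ 2) x * Yv j c x * Yv j (c * q ^+ 2) x.
Proof.
move=> dj; have := d_le_lacing d j.
by rewrite /Wv !ifN //; apply/negP => /eqP; lia.
Qed.

Definition Wparam (i : 'I_n) (a : R[i]) (k : nat) : R[i] :=
  a * q ^+ (2 * k) / q ^+ (D - d i).

Lemma Wv_prod i a x : W i a x = \prod_(k < (D - d i).+1) Yv i (Wparam i a k) x.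
Proof.
rewrite /Wparam; have := lacing_sub_le2 cartan i.
case E: (D - d i)%N => [|[|[|m]]] // _.
- rewrite big_ord1 muln0 expr0 mulr1 divr1 Wv_long //.
  by have := d_le_lacing d i; lia.
- rewrite Wv_mid // !big_ord_recl big_ord0 mulr1 /bump /=.
  congr (Yv i _ x * Yv i _ x); first by rewrite muln0 expr0 mulr1 expr1.
  by rewrite expr1 expr2 mulrA mulfK.
rewrite Wv_short // !big_ord_recl big_ord0 mulr1 mulrA /bump /=.
congr (Yv i _ x * Yv i _ x * Yv i _ x); first by rewrite muln0 expr0 mulr1.
  by rewrite mulfK ?expf_neq0.
by rewrite (exprD q 2 2) mulrA mulfK ?expf_neq0.
Qed.

Lemma T_Wv_self i a : T C d q i (W i a) = fun x =>
  \prod_(k < (D - d i).+1) A_den i (Wparam i a k * q ^+ d i) x /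
  W i (a * q ^+ d i * q ^+ d i) x.
Proof.
apply: boolp.funext => x.
have -> : T C d q i (W i a) x =
  \prod_(k < (D - d i).+1) T C d q i (Yv i (Wparam i a k)) x by exact: Wv_prod.
under eq_bigr do rewrite T_Yv_self.
rewrite prodf_div Wv_prod; congr (_ / _); apply: eq_bigr => k _.
by rewrite /Wparam; congr (Yv i _ x); ring.
Qed.

Inductive W_monomial : Fn R n -> Prop :=
| W_monomialW j a of a != 0 : W_monomial (W j a)
| W_monomialWV j a of a != 0 : W_monomial (fun x => (W j a x)^-1)
| W_monomial1 : W_monomial (fun=> 1)
| W_monomialM f g of W_monomial f & W_monomial g :
    W_monomial (fun x => f x * g x).

Lemma W_monomial_ext f g : W_monomial f -> f =1 g -> W_monomial g.
Proof. by move=> hf /boolp.funext <-. Qed.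

Lemma W_monomialV f : W_monomial f -> W_monomial (fun x => (f x)^-1).
Proof.
elim=> [j a a0|j a a0||f1 f2 _ h1 _ h2].
- exact: W_monomialWV.
- by apply: W_monomial_ext (W_monomialW j a0) _ => x; rewrite invrK.
- by apply: W_monomial_ext W_monomial1 _ => x; rewrite invr1.
- by apply: W_monomial_ext (W_monomialM h1 h2) _ => x; rewrite invfM.
Qed.

Lemma W_monomial_prod (I : Type) (r : seq I) (P : pred I) (F : I -> Fn R n) :
  (forall k, P k -> W_monomial (F k)) ->
  W_monomial (fun x => \prod_(k <- r | P k) F k x).
Proof.
move=> hF; elim: r => [|k r IH].
  by apply: W_monomial_ext W_monomial1 _ => x; rewrite big_nil.
have hk : W_monomial (fun x => if P k then F k x else 1).
  by case: (boolP (P k)) => [/hF|_]; last exact: W_monomial1.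
apply: W_monomial_ext (W_monomialM hk IH) _ => x.
by rewrite big_cons; case: (P k); rewrite ?mul1r.
Qed.

Lemma W_monomial_ZW f : W_monomial f -> ZW d q f.
Proof.
elim=> [j a a0|j a a0||f1 f2 _ h1 _ h2].
- by apply: sub_gen; exists j; exists a => //; left.
- by apply: sub_gen; exists j; exists a => //; right.
- exact: sub_one.
- exact: sub_mul.
Qed.

Lemma A_den_long i c : d i = D -> c != 0 -> W_monomial (A_den i c).
Proof.
move=> di c0.
apply: (@W_monomial_ext (fun x => \prod_(j | C j i == -1) W j c x *
  \prod_(j | C j i == -2) W j c x * \prod_(j | C j i == -3) W j c x)).
  by do 2?apply: W_monomialM; apply: W_monomial_prod => j _; exact: W_monomialW.
move=> x; rewrite /A_den; congr (_ * _ * _); apply: eq_bigr => j /eqP cji.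
- rewrite Wv_long //; have := @lacing_sub_long_nbr _ _ _ cartan _ _ 1 di cji isT.
  by have := d_le_lacing d j; lia.
- by rewrite Wv_mid //; exact: @lacing_sub_long_nbr _ _ _ cartan _ _ 2 di cji isT.
- by rewrite Wv_short //; exact: @lacing_sub_long_nbr _ _ _ cartan _ _ 3 di cji isT.
Qed.

Lemma Wparam_neq0 i a k : a != 0 -> Wparam i a k != 0.
Proof. by move=> a0; rewrite !mulf_neq0 ?invr_eq0 ?expf_neq0. Qed.

Lemma A_den_short i a : d i != D -> a != 0 -> W_monomial (fun x =>
  \prod_(k < (D - d i).+1) A_den i (Wparam i a k * q ^+ d i) x).
Proof.
move=> di a0.
have A_denE c x : A_den i c x = \prod_(j | C j i == -1) Yv j c x.
  rewrite /A_den [X in _ * X]big1 1?[X in _ * X * _]big1 ?mulr1 // => j /eqP cji;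
    by have := short_nbr_ge_m1 cartan j di; rewrite cji.
apply: (@W_monomial_ext (fun x => \prod_(j | C j i == -1)
    \prod_(k < (D - d i).+1) Yv j (Wparam i a k * q ^+ d i) x)); last first.
  by move=> x; rewrite exchange_big; apply: eq_bigr => k _; rewrite A_denE.
apply: W_monomial_prod => j _.
have [dj|[dj _]] := d_dichotomy cartan j.
  apply: W_monomial_prod => k _.
  apply: W_monomial_ext (@W_monomialW j (Wparam i a k * q ^+ d i) _) _.
    by rewrite mulf_neq0 ?Wparam_neq0 ?expf_neq0.
  by move=> x; rewrite Wv_long.
have [|[di1 _]] := d_dichotomy cartan i; first by move/eqP; rewrite (negbTE di).
apply: W_monomial_ext (@W_monomialW j (a * q ^+ d i) _) _.
  by rewrite mulf_neq0 ?expf_neq0.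
move=> x; rewrite Wv_prod /Wparam dj -di1; apply: eq_bigr => k _.
by congr (Yv j _ x); ring.
Qed.

Lemma T_Wv_monomial i j a : a != 0 -> W_monomial (T C d q i (W j a)).
Proof.
move=> a0; have [->|ji] := eqVneq j i; last first.
  by apply: W_monomial_ext (W_monomialW j a0) _ => x; rewrite T_Wv_other.
rewrite T_Wv_self.
apply: W_monomialM; last by apply: W_monomialWV; rewrite !mulf_neq0 ?expf_neq0.
have [di|di] := eqVneq (d i) D; last exact: A_den_short.
have -> : (D - d i = 0)%N by rewrite di subnn.
apply: W_monomial_ext (A_den_long di _) _; last by move=> x; rewrite big_ord1.
by rewrite mulf_neq0 ?Wparam_neq0 ?expf_neq0.
Qed.

Lemma T_ZW i f : ZW d q f -> ZW d q (T C d q i f).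
Proof.
elim=> [g [j [a a0 [->|->]]]||g1 g2 _ h1 _ h2|g1 _ h1|g1 g2 _ h1 _ h2].
- exact/W_monomial_ZW/T_Wv_monomial.
- exact/W_monomial_ZW/W_monomialV/T_Wv_monomial.
- exact: sub_one.
- exact: sub_add h1 h2.
- exact: sub_opp h1.
- exact: sub_mul h1 h2.
Qed.

Lemma Tword_ZW s f : ZW d q f -> ZW d q (Tword C d q s f).
Proof. by move=> hf; elim: s => [|i s IH] //=; apply: T_ZW. Qed.

End ChariOperators.

Theorem mainTheorem1 (R : realType) (n : nat) (C : 'M[int]_n)
  (d : 'I_n -> nat) (q : R[i]) :
  finite_cartan C d ->
  q != 0 -> (forall m : nat, (0 < m)%N -> q ^+ m != 1) ->
  forall s : seq 'I_n, reduced_word C s ->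
  forall f : Fn R n, ZW d q f -> ZW d q (Tword C d q s f).
Proof.
by move=> cartan q0 _ s _; exact: Tword_ZW.
Qed.
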